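(* Let $\Omega$ be a finite set of $n$ items, let $k,l\ge 1$ be integers, and let $f_1,\dots,f_m:2^\Omega\to\mathbb{R}_{\ge 0}$ be monotone non-decreasing submodular functions. Then the algorithm $\textsf{Sampling-Greedy}$ returns a random set $S\subseteq\Omega$ with $|S|\le l$ such that $$\mathbb{E}_S[F(S)]\;\ge\;\frac{1-1/e^2}{2}\,F(O),$$ where $O\in\arg\max_{S'\subseteq\Omega,\ |S'|\le l}F(S')$.
   Context: Define $F(S)=\sum_{i=1}^m\max_{A\subseteq S,\ |A|\le k} f_i(A)$. Submodularity of $f_i$: $f_i(A\cup\{x\})-f_i(A)\ge f_i(A'\cup\{x\})-f_i(A')$ for $A\subseteq A'$, $x\notin A'$. Notation: add a set $\Phi$ of $l$ dummy items and let $\Omega'=\Omega\cup\Phi$; extend each $f_i$ by $f_i(A)=f_i(A\cap\Omega)$ for $A\subseteq\Omega'$. Let $\Delta_i(x,A)=f_i(A\cup\{x\})-f_i(A)$; for $y\in A$, $\nabla_i(x,y,A)=f_i((A\setminus\{y\})\cup\{x\})-f_i(A)$; for $|A|\le k$: $\nabla_i(x,A)=0$ if $x\in A$; $\nabla_i(x,A)=\max\{0,\max_{y\in A}\nabla_i(x,y,A),\Delta_i(x,A)\}$ if $x\notin A$, $|A|<k$; $\nabla_i(x,A)=\max\{0,\max_{y\in A}\nabla_i(x,y,A)\}$ if $x\notin A$, $|A|=k$. Define $\textsf{Rep}_i(x,A)$ to be $\emptyset$ if $\nabla_i(x,A)=0$, or if $\nabla_i(x,A)>0$, $|A|<k$ and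 $\max_{y\in A}\nabla_i(x,y,A)<\Delta_i(x,A)$; otherwise it is $\{y^*\}$ for some $y^*\in\arg\max_{y\in A}\nabla_i(x,y,A)$. $\textsf{Trim}(B,f_i)$: start with $A\leftarrow B$, go once through the elements of $B$ in a fixed order and remove an element $x$ currently in $A$ whenever $f_i(A)-f_i(A\setminus\{x\})<0$; return $A$. $\textsf{Sampling-Greedy}$: initialize $S\leftarrow\emptyset$ and $T_i\leftarrow\emptyset$ for all $i\in[m]$. Repeat $l$ times: let $M$ be a set of exactly $l$ items of $\Omega'$ maximizing $\sum_{x\in M}\sum_{i=1}^m\nabla_i(x,T_i)$; pick $x^*$ uniformly at random from $M$ and set $S\leftarrow S\cup\{x^*\}$; for each $i\in[m]$ with $\nabla_i(x^*,T_i)>0$, set $T_i\leftarrow (T_i\setminus\textsf{Rep}_i(x^*,T_i))\cup\{x^*\}$ and then $T_i\leftarrow\textsf{Trim}(T_i,f_i)$. Finally output $S$ with dummy items removed (i.e. $S\cap\Omega$). *)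

From HB Require Import structures.
From mathcomp Require Import all_boot all_order all_algebra.
From mathcomp Require Import reals sequences exp.
Set Implicit Arguments. Unset Strict Implicit. Unset Printing Implicit Defensive.
Import Order.TTheory GRing.Theory Num.Theory.
Local Open Scope ring_scope.

Section SamplingGreedy.
Variable R : realType.
Variable T : finType.
Variables (m k l : nat).
Variable f : 'I_m -> {set T} -> R.

(* Omega' = Omega u Phi, Phi = l dummy items *)
Notation Om' := (T + 'I_l)%type.

Definition realpart (A : {set Om'}) : {set T} := [set x | inl x \in A].

Definition fe (i : 'I_m) (A : {set Om'}) : R := f i (realpart A).

(* F(S) = sum_i max_{A subset S, |A| <= k} f_i(A)   (f_i >= 0, so seeding the
   max with 0 is harmless; the empty set is always a candidate) *)
Definition Fobj (S : {set T}) : R :=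
  \sum_(i < m) \big[Num.max/0]_(A : {set T} | (A \subset S) && (#|A| <= k)%N) f i A.

Definition Delta (i : 'I_m) (x : Om') (A : {set Om'}) : R := fe i (x |: A) - fe i A.
Definition nablaxy (i : 'I_m) (x y : Om') (A : {set Om'}) : R :=
  fe i (x |: (A :\ y)) - fe i A.
(* max over y in A of nabla_i(x,y,A) (seeded with 0; only used inside max{0,..}
   or compared against Delta, where the seed is harmless) *)
Definition maxnxy (i : 'I_m) (x : Om') (A : {set Om'}) : R :=
  \big[Num.max/0]_(y in A) nablaxy i x y A.
Definition nabla (i : 'I_m) (x : Om') (A : {set Om'}) : R :=
  if x \in A then 0
  else if (#|A| < k)%N then Num.max 0 (Num.max (maxnxy i x A) (Delta i x A))
  else Num.max 0 (maxnxy i x A).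

(* tie-breaking rule choosing some y* in argmax_{y in A} nabla_i(x,y,A) *)
Variable chRep : 'I_m -> Om' -> {set Om'} -> Om'.
Definition Rep (i : 'I_m) (x : Om') (A : {set Om'}) : {set Om'} :=
  if nabla i x A == 0 then set0
  else if (#|A| < k)%N && (maxnxy i x A < Delta i x A) then set0
  else [set chRep i x A].

Variable ord : seq Om'.
Definition Trim (B : {set Om'}) (i : 'I_m) : {set Om'} :=
  foldl (fun (A : {set Om'}) (x : Om') => if (x \in B) && (x \in A) && (fe i A - fe i (A :\ x) < 0)
                    then A :\ x else A) B ord.

Definition score (Ts : 'I_m -> {set Om'}) (M : {set Om'}) : R :=
  \sum_(x in M) \sum_(i < m) nabla i x (Ts i).

Definition updT (Ts : 'I_m -> {set Om'}) (x : Om') : 'I_m -> {set Om'} :=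
  fun i => if 0 < nabla i x (Ts i)
           then Trim (x |: (Ts i :\: Rep i x (Ts i))) i
           else Ts i.

(* tie-breaking rule choosing a maximizing set M of exactly l items, as a
   function of the iteration index and the current state (S, T_1..T_m) *)
Variable chM : nat -> {set Om'} -> ('I_m -> {set Om'}) -> {set Om'}.

(* Each iteration picks
   uniformly among the l elements of M, so every leaf has probability (1/l)^l;
   the output distribution is the uniform distribution on this list. *)
Fixpoint leaves (r t : nat) (S : {set Om'}) (Ts : 'I_m -> {set Om'})
  : seq {set Om'} :=
  match r with
  | 0 => [:: S]
  | r'.+1 => flatten [seq leaves r' t.+1 (x |: S) (updT Ts x)
                     | x <- enum (chM t S Ts)]
  end.

Definition outputs : seq {set T} :=
  [seq realpart X | X <- leaves l 0 set0 (fun _ => set0)].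

Definition expectedF : R :=
  (\sum_(X <- outputs) Fobj X) / (size outputs)%:R.

End SamplingGreedy.

Definition submodular (T : finType) (R : realType) (g : {set T} -> R) : Prop :=
  forall (A A' : {set T}) (x : T), A \subset A' -> x \notin A' ->
    g (x |: A) - g A >= g (x |: A') - g A'.

(* The potential Phi = sum_i f_i(T_i) drives the analysis.  Each T_i stays inside
   the current S with at most k elements, so Phi <= F(S); since the f_i are
   monotone, Trim never removes anything, and adding x raises Phi by exactly
   sum_i nabla_i(x, T_i).  Submodularity gives, for |B| <= k,
   f_i(B) - 2 f_i(T_i) <= sum_(o in B) nabla_i(o, T_i) (adding o when T_i is not
   full, swapping o against its own element of T_i when it is), so the chosen set
   M has total gain at least F(O) - 2 Phi and a uniform x in M raises Phi by at
   least (F(O) - 2 Phi) / l on average.  With c = 1 - 2/l, averaging over the l^l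
   equally likely runs gives E[F(S)] >= c^l Phi_0 + (1 - c^l) F(O) / 2, which
   together with E[F(S)] >= Phi_0 and c^l <= e^-2 yields the bound. *)

From HB Require Import structures.
From mathcomp Require Import all_boot all_order all_algebra.
From mathcomp Require Import reals sequences exp.
From mathcomp Require Import ring lra zify.
Import Order.TTheory GRing.Theory Num.Theory.
Local Open Scope ring_scope.
Set Implicit Arguments. Unset Strict Implicit. Unset Printing Implicit Defensive.

Lemma bigmax_gt_seed_le (d : Order.disp_t) (R : orderType d) (I : finType)
    (x0 : R) (P : pred I) (F : I -> R) j :
  (forall i, P i -> (F i <= F j)%O) -> (x0 < \big[Order.max/x0]_(i | P i) F i)%O ->
  (\big[Order.max/x0]_(i | P i) F i <= F j)%O.
Proof.
move=> Fj_max x0_lt; have [x0_le|Fj_lt] := leP x0 (F j); first exact: bigmax_le.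
suff: (\big[Order.max/x0]_(i | P i) F i <= x0)%O by rewrite leNgt x0_lt.
by apply: bigmax_le => // i /Fj_max /le_trans; apply; exact: ltW.
Qed.

Section FinsetSums.
Variable I : finType.

Lemma setD1_ind (P : {set I} -> Prop) :
  P set0 -> (forall (D : {set I}) o, o \in D -> P (D :\ o) -> P D) -> forall D, P D.
Proof.
move=> P0 PD1 D; elim: {D}#|D| {-2}D (eqxx #|D|) => [|n IHn] D /eqP cardD.
  by move: cardD => /eqP; rewrite cards_eq0 => /eqP ->.
have /set0Pn [o oD] : D != set0 by rewrite -card_gt0 cardD.
apply: (PD1 D o oD); apply: IHn.
by move: cardD; rewrite (cardsD1 o) oD add1n => -[->].
Qed.

Lemma exists_superset_card (X : {set I}) n : (#|X| <= n <= #|I|)%N ->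
  exists M : {set I}, #|M| = n /\ X \subset M.
Proof.
elim: n => [|n IHn] /andP[Xn nI].
  by exists X; split=> //; apply/eqP; rewrite -leqn0.
have [Xn1|Xn1] := eqVneq #|X| n.+1; first by exists X.
have [M [cardM XM]] : exists M : {set I}, #|M| = n /\ X \subset M.
  by apply: IHn; apply/andP; split; lia.
have /subsetPn [z _ zM] : ~~ ([set: I] \subset M).
  by apply/negP => /subset_leq_card; rewrite cardsT cardM; lia.
exists (z |: M); split; last exact: subset_trans XM (subsetU1 z M).
by rewrite cardsU1 zM cardM.
Qed.

Variable R : realFieldType.

Lemma ler_sum_subset (F : I -> R) (B C : {set I}) :
  {in C, forall x, 0 <= F x} -> B \subset C ->
  \sum_(x in B) F x <= \sum_(x in C) F x.
Proof.
move=> F_ge0 BC; rewrite [X in _ <= X](big_setID B) /= (setIidPr BC) lerDl.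
by apply: sumr_ge0 => x /setDP[/F_ge0].
Qed.

Lemma ler_sumB_matching (d h s : I -> R) (D A : {set I}) :
  {in A, forall y, 0 <= h y} ->
  (forall o y, o \in D -> y \in A -> d o - h y <= s o) -> (#|D| <= #|A|)%N ->
  \sum_(o in D) d o - \sum_(y in A) h y <= \sum_(o in D) s o.
Proof.
move: A; elim/setD1_ind: D => [|D o oD IH] A h_ge0 dhs cardDA.
  by rewrite !big_set0 sub0r oppr_le0 sumr_ge0.
have [y yA] : exists y, y \in A.
  by apply/set0Pn; rewrite -card_gt0 (leq_trans _ cardDA) // (cardsD1 o) oD.
rewrite (big_setD1 o oD) (big_setD1 o oD) (big_setD1 y yA) /=.
have : \sum_(i in D :\ o) d i - \sum_(i in A :\ y) h i <= \sum_(i in D :\ o) s i.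
  apply: IH => [z /setD1P[_ /h_ge0] //| o' y' /setD1P[_ o'D] /setD1P[_ y'A] |].
    exact: dhs.
  by move: cardDA; rewrite (cardsD1 o D) (cardsD1 y A) oD yA.
have := dhs o y oD yA; lra.
Qed.

End FinsetSums.

Section SubmodularSums.
Variables (R : realType) (I : finType) (g : {set I} -> R).
Hypothesis g_submod : submodular g.

Lemma submodular_union_le_sum (A D : {set I}) : [disjoint D & A] ->
  g (A :|: D) - g A <= \sum_(o in D) (g (o |: A) - g A).
Proof.
elim/setD1_ind: D => [|D o oD IH] disDA; first by rewrite big_set0 setU0 subrr.
have oA : o \notin A by rewrite (disjointFr disDA).
have oAD : o \notin A :|: D :\ o by rewrite !inE eqxx (negbTE oA).
have := g_submod (subsetUl A (D :\ o)) oAD.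
have := IH (disjointWl (subD1set D o) disDA).
have -> : A :|: D = o |: (A :|: D :\ o) by rewrite setUCA setD1K.
rewrite (big_setD1 o oD) /=; lra.
Qed.

Lemma submodular_sum_losses_le (A C : {set I}) : C \subset A ->
  \sum_(y in C) (g A - g (A :\ y)) <= g A - g (A :\: C).
Proof.
elim/setD1_ind: C => [|C o oC IH] CA; first by rewrite big_set0 setD0 subrr.
have oA : o \in A := subsetP CA o oC.
have AC_Ao : A :\: C \subset A :\ o.
  by apply/subsetP => z /setDP[zA zC]; rewrite !inE zA andbT; apply: contraNneq zC => ->.
have oAC : o \notin A :\ o by rewrite !inE eqxx.
have := g_submod AC_Ao oAC; rewrite setD1K //.
have := IH (subset_trans (subD1set C o) CA).
have -> : A :\: (C :\ o) = o |: (A :\: C).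
  by apply/setP => z; rewrite !inE; case: (eqVneq z o) => [->|]; rewrite ?oA ?oC.
rewrite (big_setD1 o oC) /=; lra.
Qed.

End SubmodularSums.

Section RealFieldBounds.
Variable R : realFieldType.

Lemma one_round_identity (L a P F : R) : L != 0 ->
  L * (a * (1 - 2 / L) * P + (1 - a * (1 - 2 / L)) / 2 * F) =
  a * (L * P + (F - 2 * P)) + L * ((1 - a) / 2 * F).
Proof. by move=> L_neq0; field. Qed.

Lemma expr_1Bdiv_ge0 (l r : nat) : (r < l)%N -> 0 <= (1 - 2 / l%:R : R) ^+ r.
Proof.
move=> rl; have [l2|l_lt2] := leqP 2 l; last by have -> : r = 0%N by lia.
by rewrite exprn_ge0 // subr_ge0 ler_pdivrMr ?mul1r ?ler_nat ?ltr0n //; lia.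
Qed.

Lemma le_of_mixed_bound (e a P E F : R) : 0 <= e -> 0 <= F -> 0 <= P ->
  a <= e -> P <= E -> a * P + (1 - a) / 2 * F <= E -> (1 - e) / 2 * F <= E.
Proof.
move=> e_ge0 F_ge0 P_ge0 ae PE mixE; have [a_ge0|a_lt0] := leP 0 a.
  have := mulr_ge0 a_ge0 P_ge0; have : 0 <= (e - a) * F by rewrite mulr_ge0 ?subr_ge0.
  lra.
(* averaging the two bounds with weights 1 and -a cancels the P term *)
have : - a * P <= - a * E by rewrite ler_wpM2l // oppr_ge0 ltW.
have := mulr_ge0 e_ge0 F_ge0; nra.
Qed.

End RealFieldBounds.

Lemma expr_1Bdiv_le_expR (R : realType) (l : nat) : (0 < l)%N ->
  (1 - 2 / l%:R : R) ^+ l <= (expR 2)^-1.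
Proof.
move=> l_gt0; have e_ge0 : 0 <= (expR 2)^-1 :> R by rewrite invr_ge0 expR_ge0.
have [l2|l_lt2] := leqP 2 l; last first.
  have -> : l = 1%N by lia.
  rewrite expr1 divr1; lra.
have c_ge0 := expr_1Bdiv_ge0 R l2; rewrite expr1 in c_ge0.
have c_le : 1 - 2 / l%:R <= expR (- (2 / l%:R)) :> R by exact: expR_ge1Dx.
apply: le_trans (lerXn2r l _ _ c_le) _; rewrite ?nnegrE ?expR_ge0 //.
by rewrite -expRM_natr mulNr divfK ?expRN // pnatr_eq0 -lt0n.
Qed.

Section SamplingGreedyAnalysis.
Variables (R : realType) (T : finType) (m k l : nat) (f : 'I_m -> {set T} -> R).
Hypothesis f_ge0 : forall i A, 0 <= f i A.
Hypothesis f_mono : forall i (A B : {set T}), A \subset B -> f i A <= f i B.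
Hypothesis f_submod : forall i, submodular (f i).
Local Notation U := (T + 'I_l)%type.
Implicit Types (A B S : {set U}) (x y : U) (i : 'I_m) (Ts : 'I_m -> {set U}).

Lemma realpartS A B : A \subset B -> realpart A \subset realpart B.
Proof. by move=> AB; apply/subsetP => t; rewrite !inE; apply: (subsetP AB). Qed.

Lemma realpart_imset_inl (X : {set T}) : realpart (inl @: X : {set U}) = X.
Proof. by apply/setP => t; rewrite inE mem_imset //; exact: inl_inj. Qed.

Lemma realpart_setU1_inl t A : realpart (inl t |: A) = t |: realpart A.
Proof. by apply/setP => z; rewrite !inE. Qed.

Lemma realpart_setU1_inr j A : realpart (inr j |: A) = realpart A.
Proof. by apply/setP => z; rewrite !inE. Qed.

Lemma card_imset_inl (X : {set T}) : #|(inl @: X : {set U})| = #|X|.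
Proof. by apply: card_imset; exact: inl_inj. Qed.

Lemma card_realpart A : (#|realpart A| <= #|A|)%N.
Proof.
rewrite -card_imset_inl; apply: subset_leq_card.
by apply/subsetP => z /imsetP[t]; rewrite inE => tA ->.
Qed.

Lemma fe_ge0 i A : 0 <= fe f i A.
Proof. exact: f_ge0. Qed.

Lemma fe_mono i A B : A \subset B -> fe f i A <= fe f i B.
Proof. by move=> AB; apply/f_mono/realpartS. Qed.

Lemma fe_submodular i : submodular (fe f i : {set U} -> R).
Proof.
move=> A A' [t|j] AA' xA'; rewrite /fe.
  by rewrite !realpart_setU1_inl; apply: f_submod; [exact: realpartS | rewrite inE].
by rewrite !realpart_setU1_inr !subrr.
Qed.

Section Nabla.
Variables (i : 'I_m) (x : U) (A : {set U}).

Lemma maxnxy_ge0 : 0 <= maxnxy f i x A.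
Proof. exact: bigmax_ge_id. Qed.

Lemma nabla_ge0 : 0 <= nabla k f i x A.
Proof. by rewrite /nabla; case: ifP => // _; case: ifP => _; rewrite le_max lexx. Qed.

Lemma nabla_mem : x \in A -> nabla k f i x A = 0.
Proof. by rewrite /nabla => ->. Qed.

Lemma nabla_gt0_notin : 0 < nabla k f i x A -> x \notin A.
Proof. by apply: contraTN => xA; rewrite nabla_mem // ltxx. Qed.

Lemma Delta_le_nabla : x \notin A -> (#|A| < k)%N -> Delta f i x A <= nabla k f i x A.
Proof. by rewrite /nabla => /negbTE -> ->; rewrite !le_max lexx !orbT. Qed.

Lemma nablaxy_le_maxnxy y : y \in A -> nablaxy f i x y A <= maxnxy f i x A.
Proof. exact: le_bigmax_cond. Qed.

Lemma maxnxy_le_nabla : x \notin A -> maxnxy f i x A <= nabla k f i x A.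
Proof. by rewrite /nabla => /negbTE ->; case: ifP => _; rewrite !le_max lexx !orbT. Qed.

Lemma Delta_sub_loss_le_nablaxy y : y \in A -> x \notin A ->
  Delta f i x A - (fe f i A - fe f i (A :\ y)) <= nablaxy f i x y A.
Proof.
move=> yA xA; have := fe_submodular i (subD1set A y) xA.
rewrite /Delta /nablaxy; lra.
Qed.

End Nabla.

Lemma fe_sub_le_sum_Delta i A B :
  fe f i B - fe f i A <= \sum_(o in B :\: A) Delta f i o A.
Proof.
have disBA : [disjoint B :\: A & A].
  by rewrite disjoints_subset; apply/subsetP => z /setDP[_ zA]; rewrite inE.
have B_sub : B \subset A :|: B :\: A.
  by apply/subsetP => z zB; rewrite !inE zB andbT orbN.
have := submodular_union_le_sum (fe_submodular i) disBA.
have := fe_mono i B_sub; rewrite /Delta; lra.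
Qed.

Lemma fe_subr2_le_sum_nabla i A B : (#|A| <= k)%N -> (#|B| <= k)%N ->
  fe f i B - 2 * fe f i A <= \sum_(o in B) nabla k f i o A.
Proof.
move=> cardA cardB.
have : \sum_(o in B :\: A) nabla k f i o A <= \sum_(o in B) nabla k f i o A.
  by apply: ler_sum_subset (subsetDl B A) => o _; exact: nabla_ge0.
have := fe_sub_le_sum_Delta i A B; have := fe_ge0 i A.
have [cardAk|cardkA] := ltnP #|A| k.
  have : \sum_(o in B :\: A) Delta f i o A <= \sum_(o in B :\: A) nabla k f i o A.
    by apply: ler_sum => o /setDP[_ oA]; exact: Delta_le_nabla.
  lra.
(* when A is full, every o in B :\: A is matched with its own swap partner in A *)
have : \sum_(o in B :\: A) Delta f i o A - \sum_(y in A) (fe f i A - fe f i (A :\ y))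
    <= \sum_(o in B :\: A) nabla k f i o A.
  apply: ler_sumB_matching => [y _|o y /setDP[_ oA] yA|].
  - by rewrite subr_ge0 fe_mono // subD1set.
  - apply: le_trans (Delta_sub_loss_le_nablaxy i yA oA) _.
    exact: le_trans (nablaxy_le_maxnxy i o yA) (maxnxy_le_nabla i oA).
  - exact: leq_trans (subset_leq_card (subsetDl B A)) (leq_trans cardB cardkA).
have := submodular_sum_losses_le (fe_submodular i) (subxx A).
have := fe_ge0 i (A :\: A); lra.
Qed.

Lemma Trim_id (ord : seq U) B i : Trim f ord B i = B.
Proof.
rewrite /Trim; move: {2 3}B; elim: ord => //= x s IH A0.
by rewrite ifN ?IH // ltNge subr_ge0 fe_mono ?subD1set ?andbF.
Qed.

Variables (chRep : 'I_m -> U -> {set U} -> U) (ord : seq U)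
          (chM : nat -> {set U} -> ('I_m -> {set U}) -> {set U}).
Hypothesis chRep_max : forall i x y A, y \in A ->
  chRep i x A \in A /\ nablaxy f i x y A <= nablaxy f i x (chRep i x A) A.
Hypothesis chM_max : forall t S Ts, #|chM t S Ts| = l /\
  forall M : {set U}, #|M| = l -> score k f Ts M <= score k f Ts (chM t S Ts).

Local Notation Rep := (Rep k f chRep).
Local Notation upd := (updT k f chRep ord).
Local Notation leaves_of := (leaves k f chRep ord chM).

Lemma maxnxy_chRep i x A : 0 < maxnxy f i x A ->
  chRep i x A \in A /\ nablaxy f i x (chRep i x A) A = maxnxy f i x A.
Proof.
case: (set_0Vmem A) => [->|[y yA]] mx_gt0.
  by move: mx_gt0; rewrite /maxnxy big_set0 ltxx.
have [repA _] := chRep_max i x yA; split=> //.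
apply/eqP; rewrite eq_le nablaxy_le_maxnxy //=.
by apply: bigmax_gt_seed_le mx_gt0 => z zA; have [_] := chRep_max i x zA.
Qed.

Lemma swap_Rep i x A : (#|A| <= k)%N -> 0 < nabla k f i x A ->
  fe f i (x |: (A :\: Rep i x A)) = fe f i A + nabla k f i x A /\
  (#|x |: (A :\: Rep i x A)| <= k)%N.
Proof.
move=> cardA nabla_gt0; have xA := nabla_gt0_notin nabla_gt0.
have mx_ge0 := maxnxy_ge0 i x A.
rewrite /Rep (gt_eqF nabla_gt0); case: ifPn => [/andP[cardAk mx_lt]|not_add].
  have -> : nabla k f i x A = Delta f i x A.
    rewrite /nabla (negbTE xA) cardAk (max_r (ltW mx_lt)) max_r //.
    exact: le_trans mx_ge0 (ltW mx_lt).
  by rewrite setD0 /Delta addrC subrK cardsU1 xA add1n.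
have nabla_mx : nabla k f i x A = maxnxy f i x A.
  rewrite /nabla (negbTE xA); case: ifP => cardAk; last by rewrite max_r.
  by rewrite cardAk /= -leNgt in not_add; rewrite (max_l not_add) max_r.
have [repA rep_eq] : chRep i x A \in A /\ nablaxy f i x (chRep i x A) A = maxnxy f i x A.
  by apply: maxnxy_chRep; rewrite -nabla_mx.
rewrite nabla_mx -rep_eq /nablaxy addrC subrK; split=> //.
by apply: leq_trans cardA; rewrite cardsU1 (cardsD1 (chRep i x A) A) repA leq_add2r leq_b1.
Qed.

Definition potential (Ts : 'I_m -> {set U}) : R := \sum_(i < m) fe f i (Ts i).

Definition admissible S (Ts : 'I_m -> {set U}) : Prop :=
  forall i, Ts i \subset S /\ (#|Ts i| <= k)%N.

Lemma updT_spec S Ts x i : admissible S Ts ->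
  [/\ fe f i (upd Ts x i) = fe f i (Ts i) + nabla k f i x (Ts i),
      upd Ts x i \subset x |: S & (#|upd Ts x i| <= k)%N].
Proof.
move=> adm; have [TS cardT] := adm i; rewrite /updT Trim_id.
case: ifP => [nabla_gt0|nabla_le0].
  have [fe_eq card_le] := swap_Rep cardT nabla_gt0.
  by split=> //; apply/setUS/(subset_trans _ TS)/subsetDl.
have -> : nabla k f i x (Ts i) = 0.
  by apply/eqP; rewrite eq_le nabla_ge0 leNgt nabla_le0.
by rewrite addr0; split=> //; exact: subset_trans TS (subsetU1 x S).
Qed.

Lemma potential_updT S Ts x : admissible S Ts ->
  potential (upd Ts x) = potential Ts + \sum_(i < m) nabla k f i x (Ts i).
Proof.
move=> adm; rewrite /potential -big_split.
by apply: eq_bigr => i _; case: (updT_spec x i adm).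
Qed.

Lemma admissible_updT S Ts x : admissible S Ts -> admissible (x |: S) (upd Ts x).
Proof. by move=> adm i; case: (updT_spec x i adm). Qed.

Lemma potential_ge0 Ts : 0 <= potential Ts.
Proof. by apply: sumr_ge0 => i _; exact: fe_ge0. Qed.

Lemma Fobj_ge0 (O : {set T}) : 0 <= Fobj k f O.
Proof. by apply: sumr_ge0 => i _; exact: bigmax_ge_id. Qed.

Lemma potential_le_Fobj S Ts : admissible S Ts -> potential Ts <= Fobj k f (realpart S).
Proof.
move=> adm; apply: ler_sum => i _; have [TS cardT] := adm i.
rewrite /fe; apply: le_bigmax_cond.
by rewrite realpartS //= (leq_trans (card_realpart _) cardT).
Qed.

Lemma score_chM_ge t S Ts (O : {set T}) :
  (forall i, #|Ts i| <= k)%N -> (#|O| <= l)%N ->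
  Fobj k f O - 2 * potential Ts <= score k f Ts (chM t S Ts).
Proof.
move=> cardT cardO; set O' : {set U} := inl @: O.
have [M [cardM O'M]] : exists M : {set U}, #|M| = l /\ O' \subset M.
  by apply: exists_superset_card; rewrite card_imset_inl cardO card_sum card_ord leq_addl.
apply: le_trans (proj2 (chM_max t S Ts) M cardM).
apply: (le_trans _ (ler_sum_subset _ O'M)) => [|x _]; last first.
  by apply: sumr_ge0 => i _; exact: nabla_ge0.
rewrite exchange_big /Fobj /potential mulr_sumr -sumrB; apply: ler_sum => i _.
rewrite lerBlDr; apply: bigmax_le => [|A /andP[AO cardAk]].
  by rewrite addr_ge0 ?mulr_ge0 ?fe_ge0 // sumr_ge0 // => x _; exact: nabla_ge0.
have cardA' : (#|(inl @: A : {set U})| <= k)%N by rewrite card_imset_inl.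
have := fe_subr2_le_sum_nabla i (cardT i) cardA'; rewrite /fe realpart_imset_inl.
have : \sum_(x in inl @: A) nabla k f i x (Ts i) <= \sum_(x in O') nabla k f i x (Ts i).
  by apply: ler_sum_subset (imsetS _ AO) => x _; exact: nabla_ge0.
lra.
Qed.

Lemma big_leavesS (G : {set U} -> R) r t S Ts :
  \sum_(X <- leaves_of r.+1 t S Ts) G X =
  \sum_(x in chM t S Ts) \sum_(X <- leaves_of r t.+1 (x |: S) (upd Ts x)) G X.
Proof. by rewrite /= big_flatten big_map big_enum. Qed.

Lemma size_leaves r t S Ts : size (leaves_of r t S Ts) = (l ^ r)%N.
Proof.
elim: r t S Ts => [//|r IH] t S Ts /=.
rewrite size_flatten sumnE /shape big_map big_map big_enum /=.
under eq_bigr => x _ do rewrite IH.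
by rewrite sum_nat_const (proj1 (chM_max _ _ _)) expnS.
Qed.

Lemma card_leaves r t S Ts X : X \in leaves_of r t S Ts -> (#|X| <= #|S| + r)%N.
Proof.
elim: r t S Ts => [|r IH] t S Ts /=; first by rewrite inE addn0 => /eqP ->.
move=> /flattenP[_ /mapP[x _ ->] /IH /leq_trans]; apply.
by rewrite addnS -addSn leq_add2r cardsU1 -addn1 addnC leq_add2l leq_b1.
Qed.

Lemma potential_le_sum_leaves r t S Ts : admissible S Ts ->
  (l ^ r)%:R * potential Ts <= \sum_(X <- leaves_of r t S Ts) Fobj k f (realpart X).
Proof.
elim: r t S Ts => [|r IH] t S Ts adm.
  by rewrite big_seq1 mul1r; exact: potential_le_Fobj.
have -> : (l ^ r.+1)%:R * potential Ts = \sum_(x in chM t S Ts) (l ^ r)%:R * potential Ts.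
  by rewrite sumr_const (proj1 (chM_max t S Ts)) expnS natrM -mulrA mulr_natl.
rewrite big_leavesS; apply: ler_sum => x _.
apply: le_trans (IH _ _ _ (admissible_updT x adm)).
rewrite ler_wpM2l ?ler0n // (potential_updT x adm) lerDl.
by apply: sumr_ge0 => i _; exact: nabla_ge0.
Qed.

Local Notation c := (1 - 2 / l%:R : R).

Lemma sum_leaves_ge (O : {set T}) r t S Ts : (#|O| <= l)%N -> (r <= l)%N ->
  admissible S Ts ->
  (l ^ r)%:R * (c ^+ r * potential Ts + (1 - c ^+ r) / 2 * Fobj k f O)
    <= \sum_(X <- leaves_of r t S Ts) Fobj k f (realpart X).
Proof.
move=> cardO; elim: r t S Ts => [|r IH] t S Ts rl adm.
  by rewrite big_seq1 expr0 subrr !mul0r addr0 !mul1r potential_le_Fobj.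
have l_neq0 : l%:R != 0 :> R by rewrite pnatr_eq0 -lt0n; lia.
set M := chM t S Ts; set a := c ^+ r; set P := potential Ts; set FO := Fobj k f O.
have [cardM _] := chM_max t S Ts.
have a_ge0 : 0 <= a by exact: expr_1Bdiv_ge0.
have sumM : \sum_(x in M) (a * potential (upd Ts x) + (1 - a) / 2 * FO)
    = a * (l%:R * P + score k f Ts M) + l%:R * ((1 - a) / 2 * FO).
  under eq_bigr => x _ do rewrite (potential_updT x adm) mulrDr.
  rewrite !big_split /= -!mulr_sumr !sumr_const cardM /score -/P.
  by rewrite -[P *+ l]mulr_natl -[FO *+ l]mulr_natl; ring.
have step_eq : (l ^ r.+1)%:R * (c ^+ r.+1 * P + (1 - c ^+ r.+1) / 2 * FO)
    = (l ^ r)%:R * (a * (l%:R * P + (FO - 2 * P)) + l%:R * ((1 - a) / 2 * FO)).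
  by rewrite exprSr expnSr natrM -/a -mulrA one_round_identity.
rewrite big_leavesS step_eq.
apply: le_trans (ler_sum _ (fun x _ => IH t.+1 _ _ (ltnW rl) (admissible_updT x adm))).
rewrite -mulr_sumr sumM ler_wpM2l ?ler0n // lerD2r ler_wpM2l // lerD2l.
exact: score_chM_ge (fun i => (adm i).2) cardO.
Qed.


Lemma card_outputs (Y : {set T}) : Y \in outputs k f chRep ord chM -> (#|Y| <= l)%N.
Proof.
move=> /mapP[X /card_leaves Xleaf ->]; apply: leq_trans (card_realpart X) _.
by rewrite cards0 in Xleaf.
Qed.

Lemma expectedF_ge (O : {set T}) : (0 < l)%N -> (#|O| <= l)%N ->
  (1 - (expR 2)^-1) / 2 * Fobj k f O <= expectedF k f chRep ord chM.
Proof.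
move=> l_gt0 cardO.
have adm0 : admissible set0 (fun=> set0) by move=> i; rewrite sub0set cards0.
have N_gt0 : 0 < (l ^ l)%:R :> R by rewrite ltr0n expn_gt0 l_gt0.
rewrite /expectedF /outputs big_map size_map size_leaves.
apply: (le_of_mixed_bound _ (Fobj_ge0 O) (potential_ge0 _) (expr_1Bdiv_le_expR _ l_gt0)).
- by rewrite invr_ge0 expR_ge0.
- by rewrite ler_pdivlMr // mulrC; exact: potential_le_sum_leaves.
- by rewrite ler_pdivlMr // mulrC; exact: sum_leaves_ge.
Qed.

End SamplingGreedyAnalysis.

Theorem mainTheorem5 (R : realType) (T : finType) (m k l : nat)
  (f : 'I_m -> {set T} -> R)
  (chRep : 'I_m -> (T + 'I_l)%type -> {set (T + 'I_l)%type} -> (T + 'I_l)%type)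
  (ord : seq (T + 'I_l)%type)
  (chM : nat -> {set (T + 'I_l)%type} -> ('I_m -> {set (T + 'I_l)%type}) ->
         {set (T + 'I_l)%type})
  (O : {set T}) :
  (0 < k)%N -> (0 < l)%N ->
  (forall i A, 0 <= f i A) ->
  (forall i (A B : {set T}), A \subset B -> f i A <= f i B) ->
  (forall i, submodular (f i)) ->
  uniq ord -> (forall x : (T + 'I_l)%type, x \in ord) ->
  (forall (i : 'I_m) (x y : (T + 'I_l)%type) (A : {set (T + 'I_l)%type}), y \in A ->
     chRep i x A \in A /\
     nablaxy f i x y A <= nablaxy f i x (chRep i x A) A) ->
  (forall (t : nat) (S : {set (T + 'I_l)%type}) (Ts : 'I_m -> {set (T + 'I_l)%type}), #|chM t S Ts| = l /\
     forall M : {set (T + 'I_l)%type}, #|M| = l ->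
       score k f Ts M <= score k f Ts (chM t S Ts)) ->
  (#|O| <= l)%N ->
  (forall S' : {set T}, (#|S'| <= l)%N -> Fobj k f S' <= Fobj k f O) ->
  (forall S, S \in outputs k f chRep ord chM -> (#|S| <= l)%N) /\
  expectedF k f chRep ord chM >= (1 - (expR 2)^-1) / 2 * Fobj k f O.
Proof.
(* The order ord is irrelevant because Trim is the identity (Trim_id), and the
   bound holds against every O with |O| <= l, optimal or not. *)
move=> _ l_gt0 f_ge0 f_mono f_submod _ _ chRep_max chM_max cardO _.
split=> [S|]; first exact: card_outputs.
exact: expectedF_ge.
Qed.
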